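(* For every $\theta\in\Theta$, the optimality gap satisfies $\Delta(\theta)\le\sqrt{2\log v(\theta)}$, where $v(\theta)=\sup_{\theta'\in\Theta}d_2(p_\theta\|p_{\theta'})$.
   Context: Each $\theta\in\Theta$ defines a policy of an MDP inducing a trajectory distribution $p_\theta$; the return satisfies $\mathcal R(\tau)\in[0,1]$, $J(\theta)=\mathbb E_{\tau\sim p_\theta}[\mathcal R(\tau)]$, $J^*=\sup_{\theta}J(\theta)$ and $\Delta(\theta)=J^*-J(\theta)$. For probability measures $P\ll Q$, $d_2(P\|Q)=\int(\frac{dP}{dQ})^2dQ$ ($+\infty$ if $P\not\ll Q$). *)

From HB Require Import structures.
From mathcomp Require Import all_boot all_order all_algebra.
From mathcomp Require Import all_classical all_reals all_analysis.
Set Implicit Arguments. Unset Strict Implicit. Unset Printing Implicit Defensive.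
Import Order.TTheory GRing.Theory Num.Theory.
Local Open Scope classical_set_scope.
Local Open Scope ring_scope.
Local Open Scope ereal_scope.
Local Open Scope charge_scope.

Definition d2 (d : measure_display) (T : measurableType d) (R : realType)
  (P Q : probability T R) : \bar R :=
  if pselect (P `<< Q) is left _ then
    \int[Q]_x (('d (charge_of_finite_measure P) '/d Q) x *
               ('d (charge_of_finite_measure P) '/d Q) x)
  else +oo.

Definition Jret (d : measure_display) (T : measurableType d) (R : realType)
  (Theta : Type) (p : Theta -> probability T R) (Rw : T -> R) (th : Theta)
  : \bar R := \int[p th]_t (Rw t)%:E.

Definition Jstar (d : measure_display) (T : measurableType d) (R : realType)
  (Theta : Type) (p : Theta -> probability T R) (Rw : T -> R) : \bar R :=
  ereal_sup (range (Jret p Rw)).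

Definition gap (d : measure_display) (T : measurableType d) (R : realType)
  (Theta : Type) (p : Theta -> probability T R) (Rw : T -> R) (th : Theta)
  : \bar R := Jstar p Rw - Jret p Rw th.

Definition vdiv (d : measure_display) (T : measurableType d) (R : realType)
  (Theta : Type) (p : Theta -> probability T R) (th : Theta) : \bar R :=
  ereal_sup (range (fun th' => d2 (p th) (p th'))).

(* sqrt(2 log v) extended to \bar R: +oo at +oo. (v >= 1 always, so the
   -oo branch and values below 1 never occur.) *)
Definition sqrt2log (R : realType) (v : \bar R) : \bar R :=
  match v with
  | r%:E => (Num.sqrt (2 * ln r))%:E
  | +oo => +oo
  | -oo => 0
  end.

From HB Require Import structures.
From mathcomp Require Import all_boot all_order all_algebra.
From mathcomp Require Import all_classical all_reals all_analysis.
From mathcomp Require Import ring lra.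
Import Order.TTheory GRing.Theory Num.Theory measurable_realfun.
Local Open Scope classical_set_scope.
Local Open Scope ring_scope.
Local Open Scope charge_scope.

(* Let P = p_th, Q = p_th' with P << Q, and g = dP/dQ.  For f := Rw with
   values in [0, 1] and every a > 0, AM-GM gives
     E_Q f - E_P f = \int f (1 - g) dQ <= \int |1 - g| dQ
                   <= \int ((1 - g)^2 / (2a) + a / 2) dQ
                    = (d2(P||Q) - 1) / (2a) + a / 2,
   since \int g dQ = 1 and \int g^2 dQ = d2(P||Q).  Choosing a equal to the
   left-hand side D gives D^2 <= d2(P||Q) - 1 <= v(th) - 1.  As also D <= 1,
   D^2 <= min(1, v - 1) <= 2 (1 - 1/v) <= 2 log v, and taking the sup over th'
   bounds the gap. *)

Section real_inequalities.
Context {R : realType}.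
Implicit Types a f g x r : R.

Lemma normr_le_sqr_div a x : 0 < a -> `|x| <= x ^+ 2 / (2 * a) + a / 2.
Proof.
move=> a0; rewrite -subr_ge0.
have -> : x ^+ 2 / (2 * a) + a / 2 - `|x| = (`|x| - a) ^+ 2 / (2 * a).
  by rewrite -(real_normK (num_real x)); field; rewrite gt_eqF.
by rewrite divr_ge0 ?sqr_ge0 // mulr_ge0 // ltW.
Qed.

Lemma mulr1B_le_sqr_div g {a f} : 0 < a -> 0 <= f <= 1 ->
  f * (1 - g) <= (1 - g) ^+ 2 / (2 * a) + a / 2.
Proof.
move=> a0 /andP[f0 f1]; apply: le_trans (normr_le_sqr_div a (1 - g) a0).
by rewrite (le_trans (ler_norm _)) // normrM ler_piMl // ger0_norm.
Qed.

Lemma subr1V_le_ln r : 0 < r -> 1 - r^-1 <= ln r.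
Proof.
move=> r0; have := expR_ge1Dx (ln r^-1).
by rewrite lnK ?posrE ?invr_gt0 // lnV ?posrE //; lra.
Qed.

Lemma le_sqrt_2ln x r : 0 <= x <= 1 -> x ^+ 2 <= r - 1 ->
  x <= Num.sqrt (2 * ln r).
Proof.
move=> /andP[x0 x1] xr; have x2_0 := sqr_ge0 x.
have x2_1 : x ^+ 2 <= 1 by rewrite expr_le1.
have r0 : 0 < r by lra.
(* x^2 <= min(1, r - 1) <= 2 (1 - 1/r) *)
suff x2_ln : x ^+ 2 <= 2 * (1 - r^-1).
  have {x2_ln} x2_ln : x ^+ 2 <= 2 * ln r by have := subr1V_le_ln r r0; lra.
  by rewrite -[leLHS]ger0_norm // -sqrtr_sqr ler_sqrt // (le_trans x2_0).
have [r2|r2] := leP r 2.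
- apply: (le_trans xr); rewrite -subr_ge0.
  have -> : 2 * (1 - r^-1) - (r - 1) = (r - 1) * (2 - r) / r.
    by field; rewrite gt_eqF.
  by rewrite divr_ge0 ?(ltW r0) ?mulr_ge0 //; lra.
- have : r^-1 <= 2^-1 by rewrite lef_pV2 ?posrE ?ltW //; lra.
  lra.
Qed.

End real_inequalities.

Lemma Rintegral_cst_probability {d} {T : measurableType d} {R : realType}
    (P : probability T R) (c : R) :
  \int[P]_x c = c.
Proof.
rewrite Rintegral_cst // (_ : _ [set: T] = 1%E) ?mulr1 //.
exact: probability_setT.
Qed.

Section radon_nikodym_density.
Context {d} {T : measurableType d} {R : realType} {P Q : probability T R}.

Definition density : T -> R := fine \o 'd (charge_of_finite_measure P) '/d Q.

Lemma d2_lty_abs_continuous : (d2 P Q < +oo)%E -> P `<< Q.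
Proof. by rewrite /d2; case: pselect. Qed.

Hypothesis PQ : P `<< Q.

Lemma EFin_density : EFin \o density = 'd (charge_of_finite_measure P) '/d Q.
Proof. by apply/funext => x; rewrite /= fineK // Radon_Nikodym_fin_num. Qed.

Lemma integrable_density : Q.-integrable setT (EFin \o density).
Proof. by rewrite EFin_density; exact: Radon_Nikodym_integrable. Qed.

Lemma Rintegral_density : \int[Q]_x density x = 1.
Proof.
rewrite /Rintegral (_ : (fun x => _) = EFin \o density) // EFin_density.
by rewrite -Radon_Nikodym_integral //= probability_setT.
Qed.

Lemma Rintegral_mul_density f : P.-integrable setT (EFin \o f) ->
  \int[Q]_x (f x * density x) = \int[P]_x f x.
Proof.
move=> intf; rewrite /Rintegral.
rewrite -(Radon_Nikodym_change_of_variables PQ measurableT intf).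
by congr fine; apply: eq_integral => x _; rewrite EFinM -EFin_density.
Qed.

Lemma d2_density : d2 P Q = (\int[Q]_x (density x ^+ 2)%:E)%E.
Proof.
rewrite /d2; case: pselect => // _; apply: eq_integral => x _.
by rewrite -EFin_density /= -EFinM expr2.
Qed.

Lemma integrable_sqr_density : (d2 P Q < +oo)%E ->
  Q.-integrable setT (EFin \o (fun x => density x ^+ 2)).
Proof.
move=> d2_lty; apply/integrableP; split.
  apply/measurable_EFinP/measurable_funX/measurable_EFinP.
  exact: measurable_int integrable_density.
rewrite (eq_integral (fun x => (density x ^+ 2)%:E)) -?d2_density //.
by move=> x _; rewrite /= ger0_norm // sqr_ge0.
Qed.

Lemma Rintegral_sqr_density r : d2 P Q = r%:E -> \int[Q]_x density x ^+ 2 = r.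
Proof. by rewrite d2_density /Rintegral => ->. Qed.

End radon_nikodym_density.
Arguments density {d T R} P Q.

Lemma d2_ge0 {d} {T : measurableType d} {R : realType} (P Q : probability T R) :
  (0 <= d2 P Q)%E.
Proof.
case: (pselect (P `<< Q)) => [PQ|]; last by rewrite /d2; case: pselect.
by rewrite d2_density //; apply: integral_ge0 => x _; rewrite lee_fin sqr_ge0.
Qed.

Section unit_valued_function.
Context {d} {T : measurableType d} {R : realType} {f : T -> R}.
Hypotheses (mf : measurable_fun setT f) (f01 : forall x, 0 <= f x <= 1).

Let bounded_f : [bounded f x | x in [set: T]].
Proof.
exists 1; split => // M M1 x _; apply: le_trans (ltW M1).
by have /andP[f0 f1] := f01 x; rewrite ger0_norm.
Qed.

Lemma integrable_unit_valued (mu : {finite_measure set T -> \bar R}) :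
  mu.-integrable setT (EFin \o f).
Proof.
by apply: measurable_bounded_integrable => //; exact: fin_num_fun_lty.
Qed.

Lemma Rintegral_unit_valued (P : probability T R) : 0 <= \int[P]_x f x <= 1.
Proof.
apply/andP; split; first by apply: Rintegral_ge0 => x _; case/andP: (f01 x).
have intf := integrable_unit_valued P.
have int1 := finite_measure_integrable_cst P 1 measurableT.
have := le_Rintegral measurableT intf int1 (fun x _ => proj2 (andP (f01 x))).
by rewrite Rintegral_cst_probability.
Qed.

Lemma Rintegral_sub_le_d2 {P Q : probability T R} {r : R} (a : R) :
  d2 P Q = r%:E -> 0 < a ->
  \int[Q]_x f x - \int[P]_x f x <= (r - 1) / (2 * a) + a / 2.
Proof.
move=> d2r a0.
have d2_lty : (d2 P Q < +oo)%E by rewrite d2r ltry.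
have PQ := d2_lty_abs_continuous d2_lty.
set g := density P Q.
have intg := integrable_density PQ.
have intg2 := integrable_sqr_density PQ d2_lty.
have intfQ := integrable_unit_valued Q.
have intfP := integrable_unit_valued P.
have intfg : Q.-integrable setT (EFin \o (fun x => f x * g x)).
  exact: integrableMr mf bounded_f intg.
have intc c : Q.-integrable setT (EFin \o cst c).
  exact: finite_measure_integrable_cst.
have intZ (k : R) h : Q.-integrable setT (EFin \o h) ->
    Q.-integrable setT (EFin \o (fun x => k * h x)).
  exact: integrableZl.
have intD h1 h2 : Q.-integrable setT (EFin \o h1) ->
    Q.-integrable setT (EFin \o h2) ->
    Q.-integrable setT (EFin \o (fun x => h1 x + h2 x)).
  exact: integrableD.
have int_ag := intZ a^-1 _ intg.
have int_ag2 := intZ (a^-1 / 2) _ intg2.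
have int_ag2c := intD _ _ int_ag2 (intc (a^-1 / 2 + a / 2)).
have int_lhs := intD _ _ intfQ int_ag.
have int_rhs := intD _ _ intfg int_ag2c.
have ptwise x : f x + a^-1 * g x <=
    f x * g x + (a^-1 / 2 * g x ^+ 2 + (a^-1 / 2 + a / 2)).
  have := mulr1B_le_sqr_div (g x) a0 (f01 x).
  rewrite invfM; lra.
have := le_Rintegral measurableT int_lhs int_rhs (fun x _ => ptwise x).
rewrite !RintegralD //; try exact: intc.
rewrite !RintegralZl //; try exact: intc.
rewrite !Rintegral_cst_probability.
rewrite (Rintegral_density PQ) (Rintegral_mul_density PQ _ intfP).
rewrite (Rintegral_sqr_density PQ _ d2r) invfM.
lra.
Qed.

Lemma Rintegral_sub_sqr_le_d2 {P Q : probability T R} {r : R} :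
  d2 P Q = r%:E -> 0 < \int[Q]_x f x - \int[P]_x f x ->
  (\int[Q]_x f x - \int[P]_x f x) ^+ 2 <= r - 1.
Proof.
move=> d2r; set D := \int[Q]_x f x - \int[P]_x f x => D0.
have := Rintegral_sub_le_d2 D d2r D0.
have -> : (r - 1) / (2 * D) + D / 2 = (r - 1 - D ^+ 2) / (2 * D) + D.
  by field; rewrite gt_eqF.
by rewrite -/D lerDr pmulr_lge0 ?invr_gt0 ?mulr_gt0 // subr_ge0.
Qed.

End unit_valued_function.

Local Open Scope ereal_scope.

Theorem lemma5 (d : measure_display) (T : measurableType d) (R : realType)
  (Theta : Type) (p : Theta -> probability T R) (Rw : T -> R)
  (mRw : measurable_fun setT Rw)
  (Rw01 : forall t, (0 <= Rw t <= 1)%R) (th : Theta) :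
  gap p Rw th <= sqrt2log (vdiv p th).
Proof.
have JE th' : Jret p Rw th' = (\int[p th']_t Rw t)%:E.
  by rewrite /Jret fineK // integrable_fin_num // integrable_unit_valued.
have d2_le_vdiv th' : d2 (p th) (p th') <= vdiv p th.
  by apply: ereal_sup_ubound; exists th'.
case Ev: (vdiv p th) (le_trans (d2_ge0 _ _) (d2_le_vdiv th)) => [r| |] //= _;
  last by rewrite leey.
rewrite /gap JE leeBlDr //; apply: ge_ereal_sup => _ [th' _ <-].
rewrite JE -EFinD lee_fin -lerBlDr.
have := d2_le_vdiv th'; rewrite Ev.
case E2 : (d2 _ _) (d2_ge0 (p th) (p th')) => [r'| |] //.
rewrite !lee_fin => _ r'r.
have [D0|D0] := leP (\int[p th']_t Rw t - \int[p th]_t Rw t)%R 0%R.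
  exact: le_trans D0 (sqrtr_ge0 _).
have /andP[J0 _] := Rintegral_unit_valued mRw Rw01 (p th).
have /andP[_ J1] := Rintegral_unit_valued mRw Rw01 (p th').
apply: le_sqrt_2ln; first by apply/andP; split; lra.
by have := Rintegral_sub_sqr_le_d2 mRw Rw01 E2 D0; lra.
Qed.
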